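(* Fix a prompt $q$ and a policy $\pi_k$, and assume $1-\rho^+(q)-\rho^-(q)\neq 0$. Let $n\ge2$ and let $(o_i,\xi_i)_{i=1}^n$ be i.i.d. with $o_i\sim\pi_k(\cdot\mid q)$ and $\xi_i\sim U[0,1]$ independent of $o_i$. Let $\hat r_i=\hat r(q,o_i,\xi_i)$, $\bar r(q)=\frac1n\sum_{i=1}^n\hat r_i$, $\widehat{\mathrm{Var}}=\frac1{n-1}\sum_{i=1}^n(\hat r_i-\bar r(q))^2$, and \[ Z=\widehat{\mathrm{Var}}-\frac{\bar r(q)\,\rho^-(q)(1-\rho^-(q))}{(1-\rho^+(q)-\rho^-(q))^2}-\frac{(1-\bar r(q))\,\rho^+(q)(1-\rho^+(q))}{(1-\rho^+(q)-\rho^-(q))^2}. \] Then $\mathbb E[Z]=p_{\pi_k}(q)(1-p_{\pi_k}(q))=\mathrm{Var}_{o\sim\pi_k(\cdot\mid q)}(r^*(q,o))$, and $Z\to p_{\pi_k}(q)(1-p_{\pi_k}(q))$ almost surely as $n\to\infty$ (i.e. $Z$ is an unbiased and consistent estimator of the true reward variance).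
   Context: Setting: $\mathcal O$ is a countable set of responses; $r^*:\mathcal Q\times\mathcal O\to\{0,1\}$ is the true binary reward; $p_\pi(q)=\mathbb E_{o\sim\pi(\cdot\mid q)}[r^*(q,o)]$. Noise model: flip rates $\rho^+(q),\rho^-(q)\in[0,1]$; for $\xi\in[0,1]$ the observed reward is $\tilde r(q,o,\xi)=(1-r^*(q,o))\mathbf 1_{\{\xi\le\rho^+(q)\}}+r^*(q,o)\mathbf 1_{\{\xi\le 1-\rho^-(q)\}}$. The corrected reward is $\hat r(q,o,\xi)=\dfrac{\tilde r(q,o,\xi)-\rho^+(q)}{1-\rho^+(q)-\rho^-(q)}$. *)

From HB Require Import structures.
From mathcomp Require Import all_boot all_order all_algebra.
From mathcomp Require Import all_classical all_reals all_analysis.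
Set Implicit Arguments. Unset Strict Implicit. Unset Printing Implicit Defensive.
Import Order.TTheory GRing.Theory Num.Theory.
Local Open Scope classical_set_scope.
Local Open Scope ring_scope.

Section Defs.
Context {R : realType} {O : countType}.

Definition is_pmf (pq : O -> R) : Prop :=
  (forall o, 0 <= pq o) /\ (\esum_(o in [set: O]) (pq o)%:E = 1%E).

Definition success_prob (pq : O -> R) (rs : O -> bool) : R :=
  fine (\esum_(o in [set: O]) ((pq o) * (rs o)%:R)%:E).

Definition obs_reward (rs : O -> bool) (rhop rhom : R) (o : O) (xi : R) : R :=
  (1 - (rs o)%:R) * ((xi <= rhop)%R)%:R + (rs o)%:R * ((xi <= 1 - rhom)%R)%:R.

Definition corr_reward (rs : O -> bool) (rhop rhom : R) (o : O) (xi : R) : R :=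
  (obs_reward rs rhop rhom o xi - rhop) / (1 - rhop - rhom).

Definition rbar (rs : O -> bool) (rhop rhom : R) (n : nat)
    (o : nat -> O) (xi : nat -> R) : R :=
  n%:R^-1 * \sum_(i < n) corr_reward rs rhop rhom (o i) (xi i).

Definition var_hat (rs : O -> bool) (rhop rhom : R) (n : nat)
    (o : nat -> O) (xi : nat -> R) : R :=
  (n.-1)%:R^-1 * \sum_(i < n)
     (corr_reward rs rhop rhom (o i) (xi i) - rbar rs rhop rhom n o xi) ^+ 2.

Definition Z_est (rs : O -> bool) (rhop rhom : R) (n : nat)
    (o : nat -> O) (xi : nat -> R) : R :=
  var_hat rs rhop rhom n o xi
  - rbar rs rhop rhom n o xi * rhom * (1 - rhom) / (1 - rhop - rhom) ^+ 2
  - (1 - rbar rs rhop rhom n o xi) * rhop * (1 - rhop) / (1 - rhop - rhom) ^+ 2.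

End Defs.

(* The samples (o_i, xi_i)_{i in nat} on a probability space (T, P):
   o_i ~ pq, xi_i ~ U[0,1], and the whole family {o_0, xi_0, o_1, xi_1, ...}
   is mutually independent (equivalently: the pairs are i.i.d. and xi_i is
   independent of o_i).  Mutual independence is stated as the product rule for
   the events of the first n pairs, for every n (choosing A i = setT or
   B i = setT gives every finite subfamily). *)
Definition iid_samples {d} {T : measurableType d} {R : realType} {O : countType}
    (P : probability T R) (pq : O -> R)
    (o : nat -> T -> O) (xi : nat -> T -> R) : Prop :=
  [/\ (forall i (a : O), measurable (o i @^-1` [set a])),
      (forall i, measurable_fun [set: T] (xi i)),
      (forall i (a : O), P (o i @^-1` [set a]) = (pq a)%:E),
      (forall i (B : set R), measurable B ->
         P (xi i @^-1` B) = lebesgue_measure (B `&` `[0%R, 1%R]%classic)) &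
      (forall n (A : nat -> set O) (B : nat -> set R), (forall i, measurable (B i)) ->
         P (\bigcap_(i in `I_n) (o i @^-1` A i `&` xi i @^-1` B i)) =
         (\prod_(i < n) (P (o i @^-1` A i) * P (xi i @^-1` B i)))%E)].

From HB Require Import structures.
From mathcomp Require Import all_boot all_order all_algebra.
From mathcomp Require Import all_classical all_reals all_analysis.
From mathcomp Require Import ring lra.
Import Order.TTheory GRing.Theory Num.Theory numFieldNormedType.Exports.
Local Open Scope classical_set_scope.
Local Open Scope ring_scope.
Set Implicit Arguments. Unset Strict Implicit. Unset Printing Implicit Defensive.

(* The observed reward of a sample equals 1 exactly when its uniform seed falls
   below the threshold 1 - rho- (true reward 1) or rho+ (true reward 0), so the
   observed labels are i.i.d. Bernoulli with mean mu = p (1 - rho-) + (1 - p) rho+.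
   The corrected rewards are affine in these labels, hence Z is a quadratic
   function of the number K of observed ones among the n samples. Its expectation
   only involves the first two binomial moments of K and equals p (1 - p); and Z
   converges to p (1 - p) whenever K/n converges to mu, which happens almost surely
   by Chernoff's bound on the deviations of K/n and the Borel-Cantelli lemma. *)

Lemma sum_ffun_prod (S : comPzSemiRingType) n (F : 'I_n -> bool -> S) :
  \sum_(s : {ffun 'I_n -> bool}) \prod_i F i (s i) = \prod_i (F i true + F i false).
Proof. by rewrite -bigA_distr_bigA; apply: eq_bigr => i _; rewrite big_bool. Qed.

Lemma prod_if_eq (S : pzSemiRingType) n (i : 'I_n) (f : 'I_n -> S) :
  \prod_k (if k == i then f k else 1) = f i.
Proof. by rewrite -big_mkcond big_pred1_eq. Qed.

Definition count_true n (s : {ffun 'I_n -> bool}) (R : pzSemiRingType) : R :=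
  \sum_i (s i)%:R.

Section BernoulliProduct.
Variables (R : realType) (mu : R).

Definition bern (b : bool) : R := if b then mu else 1 - mu.

Definition bern_ffun n (s : {ffun 'I_n -> bool}) : R := \prod_i bern (s i).

Lemma bern_ffun_ge0 n (s : {ffun 'I_n -> bool}) : 0 <= mu <= 1 -> 0 <= bern_ffun s.
Proof.
move=> /andP[mu0 mu1]; apply: prodr_ge0 => i _; rewrite /bern.
by case: (s i); rewrite ?subr_ge0.
Qed.

Lemma sum_prod_bern_ffun n (f : 'I_n -> bool -> R) :
  \sum_(s : {ffun 'I_n -> bool}) (\prod_i f i (s i)) * bern_ffun s =
  \prod_i (f i true * mu + f i false * (1 - mu)).
Proof.
rewrite -(sum_ffun_prod (fun i b => f i b * bern b)).
by apply: eq_bigr => s _; rewrite -big_split.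
Qed.

Lemma sum_bern_ffun n : \sum_(s : {ffun 'I_n -> bool}) bern_ffun s = 1.
Proof.
transitivity (\prod_(i < n) (1 * mu + 1 * (1 - mu))).
  rewrite -(sum_prod_bern_ffun (fun _ _ => 1)).
  by under [RHS]eq_bigr do rewrite big1_eq mul1r.
by rewrite big1 // => i _; rewrite !mul1r subrKC.
Qed.

Lemma sum_pair_bern_ffun n (i j : 'I_n) :
  \sum_(s : {ffun 'I_n -> bool}) (s i)%:R * (s j)%:R * bern_ffun s =
  if i == j then mu else mu ^+ 2.
Proof.
pose f k (b : bool) : R := (if k == i then b%:R else 1) * (if k == j then b%:R else 1).
transitivity (\sum_(s : {ffun 'I_n -> bool}) (\prod_k f k (s k)) * bern_ffun s).
  by apply: eq_bigr => s _; rewrite big_split /= !prod_if_eq.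
rewrite sum_prod_bern_ffun.
transitivity (\prod_k (if (k == i) || (k == j) then mu else 1)).
  apply: eq_bigr => k _; rewrite /f.
  by case: (k == i); case: (k == j); rewrite /= ?mulr1 ?mul1r ?mul0r ?addr0 ?subrKC.
case: eqVneq => [<-|ij]; first by under eq_bigr do rewrite orbb; rewrite prod_if_eq.
rewrite (bigD1 i) //= eqxx (bigD1 j) /=; last by rewrite eq_sym.
rewrite eqxx orbT big1 ?mulr1 ?expr2 // => k /andP[ki kj].
by rewrite (negbTE ki) (negbTE kj).
Qed.

Lemma sum_count_bern_ffun n :
  \sum_(s : {ffun 'I_n -> bool}) count_true s R * bern_ffun s = n%:R * mu.
Proof.
under eq_bigr do rewrite /count_true mulr_suml.
rewrite exchange_big /=.
transitivity (\sum_(i < n) mu); last by rewrite sumr_const card_ord mulr_natl.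
apply: eq_bigr => i _.
have := sum_pair_bern_ffun i i; rewrite eqxx => <-.
apply: eq_bigr => s _.
by case: (s i); rewrite ?mul1r ?mul0r.
Qed.

Lemma sum_count_sqr_bern_ffun n :
  \sum_(s : {ffun 'I_n -> bool}) count_true s R ^+ 2 * bern_ffun s =
  n%:R * mu + n%:R * (n%:R - 1) * mu ^+ 2.
Proof.
transitivity (\sum_(s : {ffun 'I_n -> bool}) \sum_(i < n) \sum_(j < n)
    (s i)%:R * (s j)%:R * bern_ffun s).
  apply: eq_bigr => s _; rewrite /count_true expr2 -mulrA mulr_suml.
  apply: eq_bigr => i _; rewrite mulr_suml mulr_sumr.
  by apply: eq_bigr => j _; rewrite mulrA.
rewrite exchange_big /=.
transitivity (\sum_(i < n) \sum_(j < n) (if i == j then mu else mu ^+ 2)).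
  apply: eq_bigr => i _; rewrite exchange_big /=.
  by apply: eq_bigr => j _; exact: sum_pair_bern_ffun.
transitivity (\sum_(i < n) (mu + (n%:R - 1) * mu ^+ 2)).
  apply: eq_bigr => i _; rewrite (bigD1 i) //= eqxx.
  rewrite (eq_bigr (fun _ => mu ^+ 2)); last by move=> j /negbTE; rewrite eq_sym => ->.
  rewrite sumr_const cardC1 card_ord; case: n i => [[]//|n] i.
  by rewrite /= -mulr_natl -natr1; ring.
by rewrite sumr_const card_ord -mulr_natl; ring.
Qed.

Definition bern_mgf (t : R) : R := mu * expR (t * (1 - mu)) + (1 - mu) * expR (- (t * mu)).

Lemma sum_expR_count_bern_ffun n (t : R) :
  \sum_(s : {ffun 'I_n -> bool}) expR (t * (count_true s R - n%:R * mu)) * bern_ffun s =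
  bern_mgf t ^+ n.
Proof.
transitivity (\sum_(s : {ffun 'I_n -> bool})
    (\prod_i expR (t * ((s i)%:R - mu))) * bern_ffun s).
  apply: eq_bigr => s _; rewrite -expR_sum -mulr_sumr sumrB sumr_const card_ord.
  by rewrite mulr_natl.
rewrite (sum_prod_bern_ffun (fun _ b => expR (t * (b%:R - mu)))) prodr_const card_ord.
rewrite /bern_mgf /= ?subr0 ?sub0r ?mulrN.
by congr (_ ^+ _); ring.
Qed.

End BernoulliProduct.

Section Chernoff.
Variable R : realType.

Lemma expR_le_quadratic (u : R) : u <= 1/2 -> expR u <= 1 + u + 2 * u ^+ 2.
Proof.
move=> hu; have h1 : 1 - u <= expR (- u) by exact: expR_ge1Dx.
rewrite -[expR u]invrK -expRN -(@ler_pM2l _ (expR (- u))) ?expR_gt0 //.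
rewrite mulfV ?gt_eqF ?expR_gt0 //.
by apply: le_trans (ler_wpM2r _ h1); nra.
Qed.

Lemma bern_mgf_le (mu t : R) : 0 <= mu <= 1 -> `|t| <= 1/2 ->
  bern_mgf mu t <= 1 + 2 * t ^+ 2.
Proof.
move=> /andP[mu0 mu1]; rewrite ler_norml => /andP[tl tr].
have e1 := @expR_le_quadratic (t * (1 - mu)) (ltac:(nra)).
have e2 := @expR_le_quadratic (- (t * mu)) (ltac:(nra)).
apply: le_trans (lerD (ler_wpM2l mu0 e1) (ler_wpM2l (_ : 0 <= 1 - mu) e2)) _.
  by rewrite subr_ge0.
have := sqr_ge0 t; nra.
Qed.

Lemma bern_mgf_ge0 (mu t : R) : 0 <= mu <= 1 -> 0 <= bern_mgf mu t.
Proof.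
move=> /andP[mu0 mu1]; rewrite addr_ge0 // mulr_ge0 ?expR_ge0 //.
by rewrite subr_ge0.
Qed.

Lemma indicator_le_expR (e t x : R) : 0 <= t ->
  (e <= `|x|)%R%:R <= expR (- (t * e)) * (expR (t * x) + expR (- t * x)).
Proof.
move=> t0; rewrite mulrDr -!expRD.
have e1 := expR_ge0 (- (t * e) + t * x); have e2 := expR_ge0 (- (t * e) + - t * x).
case: (lerP e `|x|) => [|_]; last exact: addr_ge0.
rewrite ler_normr /= => /orP[] ex.
  by have := expR_ge1Dx (- (t * e) + t * x); nra.
by have := expR_ge1Dx (- (t * e) + - t * x); nra.
Qed.

Lemma sum_dev_bern_ffun_le (mu e t : R) n : 0 <= mu <= 1 -> 0 <= t -> (0 < n)%N ->
  \sum_(s : {ffun 'I_n -> bool})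
     (e <= `|count_true s R / n%:R - mu|)%R%:R * bern_ffun mu s <=
  expR (- (t * (n%:R * e))) * (bern_mgf mu t ^+ n + bern_mgf mu (- t) ^+ n).
Proof.
move=> hmu t0 n0; have n0' : 0 < n%:R :> R by rewrite ltr0n.
rewrite -!sum_expR_count_bern_ffun -big_split mulr_sumr /=.
apply: ler_sum => s _; rewrite -mulrDl mulrA.
apply: ler_wpM2r; first exact: bern_ffun_ge0.
have dev : n%:R * (count_true s R / n%:R - mu) = count_true s R - n%:R * mu.
  by field; rewrite gt_eqF.
have -> : (e <= `|count_true s R / n%:R - mu|) = (n%:R * e <= `|count_true s R - n%:R * mu|).
  by rewrite -dev normrM (ger0_norm (ltW n0')) ler_pM2l.
exact: indicator_le_expR.
Qed.

Definition chernoff_rate (e : R) : R := (1 + e ^+ 2 / 8) / (1 + e ^+ 2 / 4).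

Lemma chernoff_rate_gt0_lt1 (e : R) : 0 < e -> 0 < chernoff_rate e < 1.
Proof.
move=> e0; have e2 : 0 < e ^+ 2 by rewrite exprn_gt0.
by rewrite /chernoff_rate divr_gt0 ?ltr_pdivrMr /=; lra.
Qed.

(* Chernoff's bound with the exponential moment taken at [t = e/4]. *)
Lemma bern_ffun_dev_le (mu e : R) n : 0 < e <= 1 -> 0 <= mu <= 1 ->
  \sum_(s : {ffun 'I_n -> bool})
     (e <= `|count_true s R / n%:R - mu|)%R%:R * bern_ffun mu s <=
  2 * chernoff_rate e ^+ n.
Proof.
move=> /andP[e0 e1] hmu; case: n => [|n].
  apply: (@le_trans _ _ (\sum_(s : {ffun 'I_0 -> bool}) bern_ffun mu s)).
    apply: ler_sum => s _; rewrite ler_piMl ?bern_ffun_ge0 //.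
    by rewrite lern1 leq_b1.
  by rewrite sum_bern_ffun expr0 mulr1 ler1n.
pose t := e / 4; have t0 : 0 < t by rewrite divr_gt0.
apply: le_trans (sum_dev_bern_ffun_le _ hmu (ltW t0) (ltn0Sn n)) _.
have hM u : `|u| = t -> bern_mgf mu u ^+ n.+1 <= (1 + 2 * t ^+ 2) ^+ n.+1.
  move=> ut; apply: lerXn2r; rewrite ?nnegrE //.
  - exact: bern_mgf_ge0.
  - by rewrite addr_ge0 // mulr_ge0 // sqr_ge0.
  - by rewrite -ut real_normK ?num_real //; apply: bern_mgf_le => //; rewrite ut /t; lra.
have hE : expR (- (t * (n.+1%:R * e))) <= ((1 + t * e)^-1) ^+ n.+1.
  rewrite mulrCA -mulrN expRM_natl; apply: lerXn2r;
    rewrite ?nnegrE ?expR_ge0 ?invr_ge0 ?addr_ge0 ?mulr_ge0 ?(ltW t0) ?(ltW e0) //.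
  by rewrite expRN lef_pV2 ?posrE ?expR_gt0 ?addr_gt0 ?mulr_gt0 // expR_ge1Dx.
have rateE : chernoff_rate e = (1 + t * e)^-1 * (1 + 2 * t ^+ 2).
  by rewrite /chernoff_rate /t; field; apply/lt0r_neq0; nra.

rewrite rateE exprMn.
apply: le_trans (ler_pM _ _ hE (lerD (hM t _) (hM (- t) _))) _;
  rewrite ?expR_ge0 ?addr_ge0 ?exprn_ge0 ?bern_mgf_ge0 ?normrN ?gtr0_norm //.
by rewrite mulrDr; lra.
Qed.

End Chernoff.

Section Estimator.
Variables (R : realType) (O : countType).

Definition obs_label (rs : O -> bool) (a b : R) (x : O) (y : R) : bool :=
  if rs x then y <= 1 - b else y <= a.

Lemma obs_rewardE (rs : O -> bool) (a b : R) x y :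
  obs_reward rs a b x y = (obs_label rs a b x y)%:R.
Proof.
rewrite /obs_reward /obs_label; case: (rs x) => /=.
  by rewrite subrr mul0r add0r mul1r.
by rewrite subr0 mul1r mul0r addr0.
Qed.

Lemma sum_sqr_dev_affine_idem n (y : 'I_n -> R) (a D : R) : (0 < n)%N -> D != 0 ->
  (forall i, y i ^+ 2 = y i) ->
  \sum_i ((y i - a) / D - n%:R^-1 * \sum_j ((y j - a) / D)) ^+ 2 =
  ((\sum_i y i) - (\sum_i y i) ^+ 2 / n%:R) / D ^+ 2.
Proof.
move=> n0 D0 hy; have nz : n%:R != 0 :> R by rewrite pnatr_eq0 -lt0n.
set K := \sum_i y i.
have -> : \sum_j ((y j - a) / D) = (K - n%:R * a) / D.
  by rewrite -mulr_suml sumrB sumr_const card_ord mulr_natl.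
set m := n%:R^-1 * ((K - n%:R * a) / D).
set c1 := (1 - 2 * a) / D ^+ 2 - 2 * m / D.
set c0 := a ^+ 2 / D ^+ 2 + 2 * a * m / D + m ^+ 2.
rewrite (eq_bigr (fun i => y i * c1 + c0)); last first.
  move=> i _.
  have -> : y i * c1 + c0 = y i ^+ 2 / D ^+ 2 + y i * (c1 - 1 / D ^+ 2) + c0.
    by rewrite hy; field.
  by rewrite /c1 /c0; field.
rewrite big_split /= -mulr_suml sumr_const card_ord -/K.
by rewrite /c1 /c0 /m -mulr_natl; field; rewrite nz D0.
Qed.

(* [Z_est] in terms of the number [K] of observed rewards equal to 1: the mean
   corrected reward is [(K/n - a) / D] and the sum of squared deviations is
   [(K - K^2/n) / D^2], where [D = 1 - a - b]. *)
Definition Z_of_count (a b : R) (n : nat) (K : R) : R :=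
  (n.-1%:R)^-1 * ((K - K ^+ 2 / n%:R) / (1 - a - b) ^+ 2)
  - (K / n%:R - a) / (1 - a - b) * b * (1 - b) / (1 - a - b) ^+ 2
  - (1 - (K / n%:R - a) / (1 - a - b)) * a * (1 - a) / (1 - a - b) ^+ 2.

Lemma Z_estE (rs : O -> bool) (a b : R) n (o : nat -> O) (xi : nat -> R) :
  (0 < n)%N -> 1 - a - b != 0 ->
  Z_est rs a b n o xi =
  Z_of_count a b n (\sum_(i < n) (obs_label rs a b (o i) (xi i))%:R).
Proof.
move=> n0 D0; have nz : n%:R != 0 :> R by rewrite pnatr_eq0 -lt0n.
pose y (i : 'I_n) : R := (obs_label rs a b (o i) (xi i))%:R.
have corrE (i : 'I_n) : corr_reward rs a b (o i) (xi i) = (y i - a) / (1 - a - b).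
  by rewrite /corr_reward obs_rewardE.
have sumE : \sum_(i < n) corr_reward rs a b (o i) (xi i) =
    \sum_(i < n) (y i - a) / (1 - a - b) by apply: eq_bigr => i _.
rewrite /Z_est /var_hat /rbar !sumE; under eq_bigr do rewrite corrE.
rewrite sum_sqr_dev_affine_idem //; last first.
  by move=> i; rewrite /y; case: (obs_label _ _ _ _ _); rewrite ?expr1n ?expr0n.
rewrite -mulr_suml sumrB sumr_const card_ord /Z_of_count.
by congr (_ - _ - _); rewrite -mulr_natl; field; rewrite nz D0.
Qed.

End Estimator.

Section EstimatorMoments.
Variable R : realType.

Definition obs_mean (p a b : R) : R := p * (1 - b) + (1 - p) * a.

Lemma sum_Z_of_count_bern_ffun (a b p : R) n : (2 <= n)%N -> 1 - a - b != 0 ->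
  \sum_(s : {ffun 'I_n -> bool})
     Z_of_count a b n (count_true s R) * bern_ffun (obs_mean p a b) s = p * (1 - p).
Proof.
case: n => [//|[//|m]] _ D0.
set mu := obs_mean p a b; set D := 1 - a - b.
have m1 : (1 + m%:R : R) != 0 by apply/lt0r_neq0; have := ler0n R m; lra.
have m2 : (2 + m%:R : R) != 0 by apply/lt0r_neq0; have := ler0n R m; lra.
pose u2 : R := - ((m.+1%:R)^-1 / m.+2%:R / D ^+ 2).
pose u1 : R := (m.+1%:R)^-1 / D ^+ 2 - b * (1 - b) / (m.+2%:R * D ^+ 3)
   + a * (1 - a) / (m.+2%:R * D ^+ 3).
pose u0 : R := a * b * (1 - b) / D ^+ 3 - a * (1 - a) / D ^+ 2 - a * a * (1 - a) / D ^+ 3.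
have quadratic K : Z_of_count a b m.+2 K = u0 + u1 * K + u2 * K ^+ 2.
  by rewrite /Z_of_count /u0 /u1 /u2 -/D /=; field; rewrite -/D D0 m1 m2.
transitivity (\sum_(s : {ffun 'I_m.+2 -> bool}) (u0 * bern_ffun mu s
    + u1 * (count_true s R * bern_ffun mu s) + u2 * (count_true s R ^+ 2 * bern_ffun mu s))).
  by apply: eq_bigr => s _; rewrite quadratic; ring.
rewrite !big_split /= -!mulr_sumr sum_bern_ffun sum_count_bern_ffun.
rewrite sum_count_sqr_bern_ffun /u0 /u1 /u2 /mu /obs_mean /D.
by field; rewrite D0 m1 m2.
Qed.

Lemma Z_of_count_cvg (a b p : R) (K : nat -> R) : 1 - a - b != 0 ->
  (fun n => K n / n%:R) @ \oo --> obs_mean p a b ->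
  (fun n => Z_of_count a b n (K n)) @ \oo --> p * (1 - p).
Proof.
move=> D0 hK; set mu := obs_mean p a b in hK; set D := 1 - a - b.
rewrite -(cvg_shiftn 2) /= in hK; rewrite -(cvg_shiftn 2) /=.
pose x m := K (m + 2)%N / (m + 2)%N%:R.
pose c2 : R := (D ^+ 2)^-1.
pose c1 : R := - (b * (1 - b)) / D ^+ 3 + a * (1 - a) / D ^+ 3.
pose c0 : R := a * b * (1 - b) / D ^+ 3 - a * (1 - a) / D ^+ 2 - a * a * (1 - a) / D ^+ 3.
(* For [n = m + 2], the factor [n / (n - 1)] of the sample variance is [1 + harmonic m]. *)
have -> : (fun m => Z_of_count a b (m + 2) (K (m + 2)%N)) =
    (fun m => (1 + harmonic m) * (c2 * (x m - x m * x m)) + (c0 + c1 * x m)).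
  apply/funext => m; rewrite /Z_of_count /x /c0 /c1 /c2 /harmonic /= addn2 /= -/D.
  have m1 : (1 + m%:R : R) != 0 by apply/lt0r_neq0; have := ler0n R m; lra.
  have m2 : (2 + m%:R : R) != 0 by apply/lt0r_neq0; have := ler0n R m; lra.
  by field; rewrite D0 m1 m2.
have -> : p * (1 - p) = (1 + 0) * (c2 * (mu - mu * mu)) + (c0 + c1 * mu).
  by rewrite /c0 /c1 /c2 /mu /obs_mean /D; field.
apply: cvgD.
  apply: cvgM; first by apply: cvgD; [exact: cvg_cst | exact: cvg_harmonic].
  by apply: cvgM; [exact: cvg_cst | apply: cvgB => //; exact: cvgM].
by apply: cvgD; [exact: cvg_cst | apply: cvgM; [exact: cvg_cst | exact: hK]].
Qed.

End EstimatorMoments.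

Lemma measure_bigcup_finType d (T : measurableType d) (R : realType)
    (mu : {measure set T -> \bar R}) (I : finType) (F : I -> set T) :
  (forall i, measurable (F i)) -> trivIset setT F ->
  mu (\bigcup_i F i) = (\sum_i mu (F i))%E.
Proof.
move=> mF tF; rewrite measure_fin_bigcup //; last exact: finite_finset.
rewrite (fsbigE (enum I)) ?enum_uniq // => [|i _]; last by rewrite mem_enum.
by rewrite big_enum_cond; apply: eq_bigl => i; rewrite in_setT.
Qed.

Section CountableVariable.
Context {R : realType} {d : measure_display} {T : measurableType d}
  (P : probability T R) {O : countType} (pq : O -> R) (X : T -> O).
Hypothesis mX1 : forall x, measurable (X @^-1` [set x]).
Hypothesis PX1 : forall x, P (X @^-1` [set x]) = (pq x)%:E.

Lemma preimage_measurable (A : set O) : measurable (X @^-1` A).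
Proof.
have -> : X @^-1` A = \bigcup_x (if `[< A x >] then X @^-1` [set x] else set0).
  apply/seteqP; split => [w Aw|w [x _]]; first by exists (X w); rewrite ?asboolT.
  by case: ifPn => // /asboolP Ax /= ->.
apply: countable_bigcupT_measurable; first exact: countableP.
by move=> x; case: ifPn.
Qed.

Lemma preimage_prob (A : set O) : P (X @^-1` A) = (\esum_(x in A) (pq x)%:E)%E.
Proof.
have pickle_inj := pcan_inj (@pickleK O).
have -> : X @^-1` A = \bigcup_(n in pickle @` A) X @^-1` [set x | pickle x = n].
  apply/seteqP; split => [w Aw|w [_ [x Ax <-] /= /pickle_inj ->//]].
  by exists (pickle (X w)) => //; exists (X w).
rewrite measure_bigcup; last 2 first.
- by move=> n _; exact: preimage_measurable.
- by move=> n m _ _ [w [/= <- <-]].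
rewrite nneseries_esum; last by move=> n _; exact: measure_ge0.
rewrite (_ : [set n | n \in _] = pickle @` A); last first.
  by apply/seteqP; split => n; rewrite /= inE.
rewrite esum_image; last by move=> x y _ _; exact: pickle_inj.
apply: eq_esum => x _; rewrite -PX1; congr (P (X @^-1` _)).
by apply/seteqP; split => y /=; [move/pickle_inj | move=> ->].
Qed.

End CountableVariable.

Lemma measurable_le_eq (R : realType) (c : R) (t : bool) :
  measurable [set y : R | (y <= c) = t].
Proof.
have le_itv : [set y : R | y <= c] = `]-oo, c]%classic.
  by apply/seteqP; split => y /=; rewrite in_itv.
case: t; first by rewrite (_ : [set _ | _] = [set y | y <= c]) // le_itv.
rewrite (_ : [set _ | _] = ~` [set y | y <= c]); last first.
  by apply/seteqP; split => y /=; [move=> -> | move/negP/negbTE].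
by apply: measurableC; rewrite le_itv.
Qed.

Section UniformVariable.
Context {R : realType} {d : measure_display} {T : measurableType d}
  (P : probability T R) (U : T -> R).
Hypothesis mU : measurable_fun [set: T] U.
Hypothesis PU : forall B, measurable B ->
  P (U @^-1` B) = lebesgue_measure (B `&` `[0%R, 1%R]%classic).

Lemma prob_uniform_le_eq (c : R) (t : bool) : 0 <= c <= 1 ->
  P (U @^-1` [set y | (y <= c) = t]) = (if t then c else 1 - c)%:E.
Proof.
move=> /andP[c0 c1].
have Ple : P (U @^-1` [set y | (y <= c) = true]) = c%:E.
  rewrite PU; last exact: measurable_le_eq.
  rewrite (_ : _ `&` _ = `[0%R, c]%classic); last first.
    apply/seteqP; split => y /=; rewrite !in_itv /=; first by move=> [-> /andP[-> _]].
    by move=> /andP[y0 yc]; rewrite yc y0 (le_trans yc).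
  rewrite lebesgue_measure_itv /= lte_fin.
  by case: ltP => [_|c_le0]; rewrite ?oppr0 ?adde0 // (@le_anti _ _ c 0) ?c_le0.
case: t => //.
have -> : [set y : R | (y <= c) = false] = ~` [set y | (y <= c) = true].
  by apply/seteqP; split => y /=; [move=> -> | move/negP/negbTE].
rewrite -preimage_setC probability_setC ?Ple //.
by rewrite -[_ @^-1` _]setTI; apply: mU => //; exact: measurable_le_eq.
Qed.

End UniformVariable.

(* Extension by [false] of a finite family, to match the [nat]-indexed families of
   [iid_samples]. *)
Definition ext_ffun n (c : {ffun 'I_n -> bool}) (k : nat) : bool :=
  if insub k is Some i then c i else false.

Lemma ext_ffun_ord n (c : {ffun 'I_n -> bool}) (i : 'I_n) : ext_ffun c i = c i.
Proof. by rewrite /ext_ffun valK. Qed.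

Lemma bigcap_setU_bool (T : Type) n (F : nat -> bool -> set T) :
  \bigcap_(k in `I_n) (F k true `|` F k false) =
  \bigcup_(c : {ffun 'I_n -> bool}) \bigcap_(k in `I_n) F k (ext_ffun c k).
Proof.
apply/seteqP; split => [w Fw|w [c _ Fw] k kn]; last first.
  by case: (ext_ffun c k) (Fw k kn); [left|right].
exists [ffun i : 'I_n => `[< F i true w >]] => // k /= kn.
rewrite -[k]/(nat_of_ord (Ordinal kn)) ext_ffun_ord ffunE.
by case: (asboolP (F k true w)) => // nF; case: (Fw k kn).
Qed.

Section FiniteVariable.
Context {R : realType} {d : measure_display} {T : measurableType d}
  (P : probability T R) (F : finType) (Y : T -> F).
Hypothesis mY : forall s, measurable [set w | Y w = s].

Lemma measurable_fin_pred (Phi : pred F) : measurable [set w | Phi (Y w)].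
Proof.
have -> : [set w | Phi (Y w)] = \bigcup_(s in [set s | Phi s]) [set w | Y w = s].
  by apply/seteqP; split => [w /= Yw|w [s /= Ps ->//]]; exists (Y w).
by apply: fin_bigcup_measurable; [exact: finite_finset | move=> s _; exact: mY].
Qed.

Local Open Scope ereal_scope.

Lemma expectation_fin (g : F -> R) :
  'E_P[fun w => g (Y w)] = \sum_s (g s)%:E * P [set w | Y w = s].
Proof.
have gE w : (g (Y w))%:E = \sum_s (g s)%:E * (\1_[set w | Y w = s] w)%:E.
  rewrite (bigD1 (Y w)) //= big1 ?adde0 => [|s sY]; first by rewrite indicE mem_set ?mule1.
  by rewrite indicE memNset ?mule0 //= => Ys; rewrite Ys eqxx in sY.
rewrite unlock; under eq_integral do rewrite gE.
rewrite integral_sum //; last first.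
  by move=> s; apply: integrableZl => //; exact: integrable_indic.
apply: eq_bigr => s _; rewrite integralZl //; last exact: integrable_indic.
by rewrite integral_indic ?setIT.
Qed.

Lemma prob_fin_pred (Phi : pred F) :
  P [set w | Phi (Y w)] = \sum_s (Phi s)%:R%:E * P [set w | Y w = s].
Proof.
rewrite -expectation_fin -expectation_indic; last exact: measurable_fin_pred.
congr expectation; apply/funext => w.
by rewrite indicE; case h : (Phi (Y w)); [rewrite mem_set | rewrite memNset //= h].
Qed.

End FiniteVariable.

Lemma nneseries_lty_geometric (R : realType) (u : nat -> \bar R) (c r : R) :
  0 <= c -> 0 < r < 1 -> (forall n, (0 <= u n)%E) ->
  (forall n, (u n <= (c * r ^+ n)%:E)%E) -> (\sum_(n <oo) u n < +oo)%E.
Proof.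
move=> c0 /andP[r0 r1] u0 uc; apply: (@le_lt_trans _ _ (c / (1 - r))%:E); last exact: ltry.
apply: lime_le; first exact: is_cvg_nneseries.
apply: nearW => n; apply: (@le_trans _ _ (\sum_(0 <= i < n) (c * r ^+ i)%:E)%E).
  exact: lee_sum.
rewrite sumEFin lee_fin.
by apply: (geometric_le_lim n c0 r0); rewrite ger0_norm ?ltW.
Qed.

Lemma lim_sup_setN (T : Type) (F : (set T)^nat) w :
  ~ lim_sup_set F w -> exists N, forall n, (N <= n)%N -> ~ F n w.
Proof.
move=> nF; apply: contrapT => nN; apply: nF => N _; apply: contrapT => nU.
by apply: nN; exists N => n Nn Fn; apply: nU; exists n.
Qed.

Section Observations.
Context {R : realType} {d : measure_display} {T : measurableType d}
  (P : probability T R) {O : countType} (pq : O -> R)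
  (o : nat -> T -> O) (xi : nat -> T -> R) (rs : O -> bool) (a b : R).
Hypotheses (a01 : 0 <= a <= 1) (b01 : 0 <= b <= 1).
Hypothesis samples : iid_samples P pq o xi.

Let p := success_prob pq rs.
Let mu := obs_mean p a b.

Definition threshold (u : bool) : R := if u then 1 - b else a.

Definition cell k (u t : bool) : set T :=
  o k @^-1` [set x | rs x = u] `&` xi k @^-1` [set y | (y <= threshold u) = t].

Definition cell_weight (u t : bool) : R :=
  (if u then p else 1 - p) * (if t then threshold u else 1 - threshold u).

Definition obs k w : bool := obs_label rs a b (o k w) (xi k w).

Definition obs_vec n w : {ffun 'I_n -> bool} := [ffun i : 'I_n => obs i w].

Let o_measurable k (A : set O) : measurable (o k @^-1` A).
Proof. by case: samples => mo _ Po _ _; exact: (preimage_measurable (mo k)). Qed.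

Lemma prob_label k : P (o k @^-1` [set x | rs x]) = p%:E.
Proof.
case: samples => mo _ Po _ _; rewrite (preimage_prob (mo k) (Po k)) /p /success_prob.
have -> : (\esum_(x in [set: O]) (pq x * (rs x)%:R)%:E =
           \esum_(x in [set x | rs x]) (pq x)%:E)%E.
  rewrite [RHS]esum_mkcond; apply: eq_esum => x _.
  by case rx : (rs x); [rewrite mem_set // mulr1 | rewrite memNset ?mulr0 //= rx].
by rewrite fineK // -(preimage_prob (mo k) (Po k)) fin_num_measure.
Qed.

Lemma prob_label_eq k u : P (o k @^-1` [set x | rs x = u]) = (if u then p else 1 - p)%:E.
Proof.
case: u; first exact: prob_label.
rewrite (_ : [set x | _] = ~` [set x | rs x]); last first.
  by apply/seteqP; split => x /=; [move=> -> | move/negP/negbTE].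
by rewrite -preimage_setC probability_setC ?prob_label //; exact: o_measurable.
Qed.

Lemma threshold01 u : 0 <= threshold u <= 1.
Proof.
by move: b01 => /andP[? ?]; case: u => //=; apply/andP; split; lra.
Qed.

Lemma measurable_cell k u t : measurable (cell k u t).
Proof.
apply: measurableI; first exact: o_measurable.
case: samples => _ mxi _ _ _; rewrite -[_ @^-1` _]setTI.
by apply: (mxi k) => //; exact: measurable_le_eq.
Qed.

Lemma prob_bigcap_cells n (c s : nat -> bool) :
  P (\bigcap_(k in `I_n) cell k (c k) (s k)) = (\prod_(k < n) cell_weight (c k) (s k))%:E.
Proof.
case: samples => _ mxi _ Pxi indep.
rewrite indep => [|k]; last exact: measurable_le_eq.
rewrite -prodEFin; apply: eq_bigr => k _.
by rewrite prob_label_eq (prob_uniform_le_eq (mxi k) (Pxi k)) ?threshold01.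
Qed.

Lemma cell_weight_sum t : cell_weight true t + cell_weight false t = bern mu t.
Proof. by rewrite /cell_weight /bern /mu /obs_mean /threshold; case: t => /=; ring. Qed.

Lemma obs_eq_cells k t : [set w | obs k w = t] = cell k true t `|` cell k false t.
Proof.
apply/seteqP; split => w /=; rewrite /obs /obs_label /cell /threshold /=.
  by case: (rs (o k w)) => <-; [left | right].
by move=> [[-> <-]|[-> <-]].
Qed.

Lemma obs_vec_eqE n (s : {ffun 'I_n -> bool}) :
  [set w | obs_vec n w = s] = \bigcap_(k in `I_n) [set w | obs k w = ext_ffun s k].
Proof.
apply/seteqP; split => w /=.
  move=> <- k kn; rewrite -[k]/(nat_of_ord (Ordinal kn)).
  by rewrite ext_ffun_ord ffunE.
by move=> ws; apply/ffunP => i; rewrite ffunE -ext_ffun_ord; exact: ws i (ltn_ord i).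
Qed.

Lemma measurable_obs_vec n (s : {ffun 'I_n -> bool}) : measurable [set w | obs_vec n w = s].
Proof.
rewrite obs_vec_eqE; apply: bigcap_measurableType => k _.
by rewrite obs_eq_cells; apply: measurableU; exact: measurable_cell.
Qed.

(* Splitting each event [obs k = s k] along the true reward [rs (o k)] turns the
   intersection into a disjoint union of products of independent events; the
   resulting sum of products factorises back by [sum_ffun_prod]. *)
Lemma prob_obs_vec n (s : {ffun 'I_n -> bool}) :
  P [set w | obs_vec n w = s] = (bern_ffun mu s)%:E.
Proof.
rewrite obs_vec_eqE.
under eq_bigcapr do rewrite obs_eq_cells.
rewrite (bigcap_setU_bool n (fun k u => cell k u (ext_ffun s k))).
rewrite measure_bigcup_finType; last 2 first.
- by move=> c; apply: bigcap_measurableType => k _; exact: measurable_cell.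
- move=> c c' _ _ [w [cw c'w]]; apply/ffunP => i.
  have := cw i (ltn_ord i); have := c'w i (ltn_ord i).
  by rewrite !ext_ffun_ord => -[/= <- _] [/= <- _].
under eq_bigr => c _ do rewrite /= (prob_bigcap_cells n (ext_ffun c) (ext_ffun s)).
rewrite sumEFin; congr EFin.
under eq_bigr do under eq_bigr do rewrite !ext_ffun_ord.
rewrite (sum_ffun_prod (fun i u => cell_weight u (s i))).
by apply: eq_bigr => i _; exact: cell_weight_sum.
Qed.

Lemma expectation_obs_vec n (g : {ffun 'I_n -> bool} -> R) :
  ('E_P[fun w => g (obs_vec n w)])%E = (\sum_(s : {ffun 'I_n -> bool}) g s * bern_ffun mu s)%:E.
Proof.
rewrite (expectation_fin _ (@measurable_obs_vec n)) -sumEFin.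
by apply: eq_bigr => s _; rewrite prob_obs_vec.
Qed.

Lemma obs_mean01 : 0 <= mu <= 1.
Proof.
have p0 : (0 <= P (o 0 @^-1` [set x | rs x]))%E := measure_ge0 P _.
have p1 := probability_le1 P (o_measurable 0 [set x | rs x]).
rewrite prob_label lee_fin in p0; rewrite prob_label lee_fin in p1.
rewrite /mu /obs_mean; clearbody p.
by move: a01 b01 => /andP[? ?] /andP[? ?]; apply/andP; split; nra.
Qed.

Lemma obs_dev_negligible (e : R) : 0 < e <= 1 ->
  P.-negligible (lim_sup_set (fun n =>
    [set w | e <= `|count_true (obs_vec n w) R / n%:R - mu|])).
Proof.
move=> e01; set A := fun n => _.
have mA n : measurable (A n).
  exact: (measurable_fin_pred (@measurable_obs_vec n)
            (fun s => e <= `|count_true s R / n%:R - mu|)).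
exists (lim_sup_set A); split => //.
  by apply: bigcap_measurableType => n _; apply: bigcup_measurable => j _.
have PA n : (P (A n) <= (2 * chernoff_rate e ^+ n)%:E)%E.
  rewrite /A (prob_fin_pred P (@measurable_obs_vec n)
    (fun s => e <= `|count_true s R / n%:R - mu|)).
  under eq_bigr do rewrite prob_obs_vec -EFinM.
  by rewrite sumEFin lee_fin bern_ffun_dev_le // obs_mean01.
apply: lim_sup_set_cvg0 => //.
have /andP[r0 r1] := chernoff_rate_gt0_lt1 (proj1 (andP e01)).
by apply: (@nneseries_lty_geometric _ _ 2 (chernoff_rate e)); rewrite ?r0.
Qed.

Lemma obs_mean_cvg :
  {ae P, forall w, (fun n => count_true (obs_vec n w) R / n%:R) @ \oo --> mu}.
Proof.
have e01 k : 0 < (k.+1%:R^-1 : R) <= 1.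
  by rewrite invr_gt0 ltr0n /= invf_le1 ?ler1n ?ltr0n.
apply: (negligibleS _ (negligible_bigcup (fun k => obs_dev_negligible (e01 k)))).
move=> w /= ncv; apply: contrapT => nU; apply: ncv; apply/cvgrPdist_lt => e e0.
have [k ke] : exists k, k.+1%:R^-1 < e.
  have [N _ hN] := near_infty_natSinv_lt (PosNum e0).
  by exists N; exact: (hN N (leqnn N)).
have [N hN] := lim_sup_setN (fun w_limsup => nU (ex_intro2 _ _ k I w_limsup)).
exists N => // n /= Nn; rewrite distrC.
by apply: lt_trans ke; rewrite ltNge; apply/negP; exact: hN.
Qed.

End Observations.

Theorem proposition4 (R : realType) (Q : Type) (O : countType)
    (rstar : Q -> O -> bool) (rhop rhom : Q -> R) (pik : Q -> O -> R) (q : Q)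
    (d : measure_display) (T : measurableType d) (P : probability T R)
    (o : nat -> T -> O) (xi : nat -> T -> R) :
  (forall q', 0 <= rhop q' <= 1 /\ 0 <= rhom q' <= 1) ->
  (forall q', is_pmf (pik q')) ->
  1 - rhop q - rhom q != 0 ->
  iid_samples P (pik q) o xi ->
  let p := success_prob (pik q) (rstar q) in
  let Z := fun (n : nat) (w : T) =>
    Z_est (rstar q) (rhop q) (rhom q) n (fun i => o i w) (fun i => xi i w) in
  (forall n : nat, (2 <= n)%N -> ('E_P[Z n])%E = (p * (1 - p))%:E) /\
  {ae P, forall w, (fun n => Z n w) @ \oo --> (p * (1 - p) : R)}.
Proof.
(* The laws of the samples are fixed by [iid_samples]. *)
move=> rho01 _ D0 samples p Z; have [a01 b01] := rho01 q.
pose K n w := count_true (obs_vec o xi (rstar q) (rhop q) (rhom q) n w) R.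
have ZE n w : (0 < n)%N -> Z n w = Z_of_count (rhop q) (rhom q) n (K n w).
  move=> n0; rewrite /Z Z_estE //; congr Z_of_count.
  by apply: eq_bigr => i _; rewrite ffunE.
split=> [n n2|].
  have -> : Z n = fun w => Z_of_count (rhop q) (rhom q) n (K n w).
    by apply/funext => w; rewrite ZE // (leq_trans _ n2).
  rewrite (expectation_obs_vec (rstar q) a01 b01 samples
    (fun s => Z_of_count (rhop q) (rhom q) n (count_true s R))).
  by congr EFin; exact: sum_Z_of_count_bern_ffun.
apply: filterS (obs_mean_cvg (rstar q) a01 b01 samples) => w /= /(Z_of_count_cvg D0) hZ.
rewrite -(cvg_shiftn 1) /=; rewrite -(cvg_shiftn 1) /= in hZ.
suff -> : (fun n => Z (n + 1)%N w) =
          (fun n => Z_of_count (rhop q) (rhom q) (n + 1) (K (n + 1)%N w)) by [].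
by apply/funext => n; rewrite ZE ?addn1.
Qed.
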